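(* Let $m\ge1$, let $W$ be a B-DMC, and let $E[J_n]$ be as in the context. For integers $k\ge0$ define $E[\hat J_k]=\min_{i\in\{0,1,\dots,m-1\}}E[J_{km-i}]$. Then $E[\hat J_k]\ge E[\hat J_{k-1}]$ for every $k\ge1$.
   Context: Fix an integer $m\ge1$. Define integers $N(n)$ by $N(n)=1$ for $1-m\le n\le 0$ and $N(n)=N(n-1)+N(n-m)$ for $n\ge1$; write $\mathbb N_n=\{1,\dots,N(n)\}$ (so $\mathbb N_n=\{1\}$ for $n\le 0$, and $\mathbb N_{n-m}\subseteq\mathbb N_{n-1}$). Define vectors $\mathbf s_n^{(i)}\in\{+,-,\bigstar\}^n$ for $n\ge0$, $i\in\mathbb N_n$, recursively: $\mathbf s_0^{(1)}$ is the empty vector, and for $n\ge1$: $\mathbf s_n^{(j)}=(\mathbf s_{n-1}^{(j)},+)$ and $\mathbf s_n^{(j+N(n-1))}=(\mathbf s_{n-1}^{(j)},-)$ for $j\in\mathbb N_{n-m}$, while $\mathbf s_n^{(j)}=(\mathbf s_{n-1}^{(j)},\bigstar)$ for $j\in\mathbb N_{n-1}\setminus\mathbb N_{n-m}$. Let $\mathcal S_n=\{\mathbf s_n^{(i)}:i\in\mathbb N_n\}$ for $n\ge1$. A B-DMC $V$ is a channel with input alphabet $\{0,1\}$, a finite output alphabet $\mathcal Y$ and transition probabilities $V(y|x)$. With base-2 logarithms and uniform input: $I(V)=\sum_{y}\sum_{x}\frac12V(y|x)\log\frac{V(y|x)}{\frac12V(y|0)+\frac12V(y|1)}$, $Z(V)=\sum_y\sqrt{V(y|0)V(y|1)}$,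 $J(V)=\log\frac{2}{1+Z(V)}$. For B-DMCs $V':\{0,1\}\to\mathcal Y_1$ and $V'':\{0,1\}\to\mathcal Y_2$ define $V'\boxminus V'':\{0,1\}\to\mathcal Y_1\times\mathcal Y_2$ by $(V'\boxminus V'')(y_1,y_2|x_1)=\sum_{x_2\in\{0,1\}}\frac12V'(y_1|x_1\oplus x_2)V''(y_2|x_2)$, and $V'\boxplus V'':\{0,1\}\to\mathcal Y_1\times\mathcal Y_2\times\{0,1\}$ by $(V'\boxplus V'')(y_1,y_2,x_1|x_2)=\frac12V'(y_1|x_1\oplus x_2)V''(y_2|x_2)$. Fix a B-DMC $W$. For every finite string $\mathbf t=(t_1,\dots,t_n)\in\{+,-,\bigstar\}^n$, $n\ge0$, define a B-DMC $W_{\mathbf t}$ recursively: $W_{\emptyset}=W$ for the empty string; for $n\ge1$ let $\mathbf t'=(t_1,\dots,t_{n-1})$ and $\mathbf t''=(t_1,\dots,t_{n-m})$ (the empty string if $n\le m$); then $W_{\mathbf t}=W_{\mathbf t''}\boxplus W_{\mathbf t'}$ if $t_n=+$, $W_{\mathbf t}=W_{\mathbf t''}\boxminus W_{\mathbf t'}$ if $t_n=-$, and $W_{\mathbf t}=W_{\mathbf t'}$ if $t_n=\bigstar$. For $n\ge1$ let $E[J_n]=\frac{1}{N(n)}\sum_{\mathbf s\in\mathcal S_n}J(W_{\mathbf s})$, and for $n\le0$ let $E[J_n]=J(W)$. *)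

From Stdlib Require Import Reals List Arith ZArith.
Import ListNotations.
Open Scope R_scope.

(* A B-DMC with input {0,1} and finite output alphabet {0,...,k-1} is
   represented by its transition matrix, listed output by output:
   the y-th entry is the pair (V(y|0), V(y|1)). *)
Definition channel := list (R * R).

Definition valid_channel (V : channel) : Prop :=
  Forall (fun p => 0 <= fst p /\ 0 <= snd p) V /\
  fold_right Rplus 0 (map fst V) = 1 /\
  fold_right Rplus 0 (map snd V) = 1.

Definition log2 (x : R) : R := ln x / ln 2.

Definition Zb (V : channel) : R :=
  fold_right Rplus 0 (map (fun p => sqrt (fst p * snd p)) V).
Definition Jc (V : channel) : R := log2 (2 / (1 + Zb V)).

(* (V' boxminus V'')(y1,y2|x1) = sum_{x2} 1/2 V'(y1|x1+x2) V''(y2|x2);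
   outputs (y1,y2) enumerated over y1 then y2. *)
Definition boxminus (V' V'' : channel) : channel :=
  flat_map (fun p => map (fun q =>
     (/2 * (fst p * fst q + snd p * snd q),
      /2 * (snd p * fst q + fst p * snd q))) V'') V'.

(* (V' boxplus V'')(y1,y2,x1|x2) = 1/2 V'(y1|x1+x2) V''(y2|x2);
   outputs (y1,y2,x1) with x1 = 0 then x1 = 1. *)
Definition boxplus (V' V'' : channel) : channel :=
  flat_map (fun p => flat_map (fun q =>
     [ (/2 * (fst p * fst q), /2 * (snd p * snd q)) ;
       (/2 * (snd p * fst q), /2 * (fst p * snd q)) ]) V'') V'.

Inductive sym : Set := Plus | Minus | Star.

(* Window of the integers N: Nwin m k = [N(k); N(k-1); ...; N(k-m+1)],
   with N(j) = 1 for 1-m <= j <= 0 and N(n) = N(n-1) + N(n-m) for n >= 1. *)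
Fixpoint Nwin (m k : nat) : list nat :=
  match k with
  | O => repeat 1%nat m
  | S k' => let w := Nwin m k' in (hd 1%nat w + last w 1%nat)%nat :: removelast w
  end.

(* N(n) for n >= 0.  For n <= 0 one has N(n) = 1 = N(0), so N(n - m) with
   truncated nat subtraction is correct. *)
Definition Nn (m n : nat) : nat := hd 1%nat (Nwin m n).

(* S_n as a list of strings (t_1, ..., t_n), indices ordered as in the paper:
   s^(j) for j in N_{n-m}, then j in N_{n-1} \ N_{n-m}, then j + N(n-1). *)
Fixpoint Sset (m n : nat) : list (list sym) :=
  match n with
  | O => [ [] ]
  | S n' =>
    let P := Sset m n' in
    let k := Nn m (S n' - m) in
    map (fun s => s ++ [Plus]) (firstn k P) ++
    map (fun s => s ++ [Star]) (skipn k P) ++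
    map (fun s => s ++ [Minus]) (firstn k P)
  end.

(* W_t, defined with fuel (length t suffices since m >= 1). *)
Fixpoint Wfuel (m : nat) (W : channel) (fuel : nat) (t : list sym) : channel :=
  match fuel with
  | O => W
  | S f =>
    match t with
    | [] => W
    | _ =>
      let t' := removelast t in
      let t'' := firstn (length t - m) t in
      match last t Star with
      | Plus => boxplus (Wfuel m W f t'') (Wfuel m W f t')
      | Minus => boxminus (Wfuel m W f t'') (Wfuel m W f t')
      | Star => Wfuel m W f t'
      end
    end
  end.

Definition Wt (m : nat) (W : channel) (t : list sym) : channel :=
  Wfuel m W (length t) t.

Definition EJ (m : nat) (W : channel) (n : Z) : R :=
  if (n <=? 0)%Z then Jc W
  else let nn := Z.to_nat n in
       / INR (Nn m nn) *
       fold_right Rplus 0 (map (fun s => Jc (Wt m W s)) (Sset m nn)).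

Definition EJhat (m : nat) (W : channel) (k : nat) : R :=
  fold_right Rmin (EJ m W (Z.of_nat k * Z.of_nat m)%Z)
    (map (fun i => EJ m W (Z.of_nat k * Z.of_nat m - Z.of_nat i)%Z) (seq 0 m)).

Example N_test : map (Nn 2) [0;1;2;3;4;5]%nat = [1;2;3;5;8;13]%nat.
Proof. reflexivity. Qed.
Example S_test : length (Sset 2 4) = 8%nat.
Proof. reflexivity. Qed.

(* Polarization never loses J on average: Z(V' ⊞ V'') = Z' Z'' and
   Z(V' ⊟ V'') <= Z' + Z'' - Z' Z'', so J(V' ⊞ V'') + J(V' ⊟ V'') >= J(V') + J(V'').
   The first N(n+1-m) strings of S_n, truncated to length n+1-m, enumerate
   S_{n+1-m}; hence the sum T(n) of J over S_n satisfies T(n+1) >= T(n) + T(n+1-m),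
   and since N(n+1) = N(n) + N(n+1-m) the mediant inequality gives
   E[J_{n+1}] >= min(E[J_n], E[J_{n+1-m}]).  A lower bound holding on m
   consecutive values of E[J] therefore holds on all later ones, in particular
   the minimum over the window ending at (k-1)m bounds the next window. *)

From Stdlib Require Import Reals List ZArith Lra Lia Psatz.
Import ListNotations.
Open Scope R_scope.

Notation sumR := (fold_right Rplus 0).

Lemma sumR_app l1 l2 : sumR (l1 ++ l2) = sumR l1 + sumR l2.
Proof. induction l1 as [|x l1 IH]; simpl; [ring|]. rewrite IH; ring. Qed.

Lemma sumR_flat_map {A B} (g : B -> R) (h : A -> list B) l :
  sumR (map g (flat_map h l)) = sumR (map (fun x => sumR (map g (h x))) l).
Proof. induction l as [|x l IH]; simpl; auto. rewrite map_app, sumR_app, IH; auto. Qed.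

Lemma sumR_map_ext {A} (f g : A -> R) l :
  (forall x, In x l -> f x = g x) -> sumR (map f l) = sumR (map g l).
Proof. intros H. f_equal. now apply map_ext_in. Qed.

Lemma sumR_map_le {A} (f g : A -> R) l :
  (forall x, In x l -> f x <= g x) -> sumR (map f l) <= sumR (map g l).
Proof.
  induction l as [|x l IH]; simpl; intros H; [lra|].
  apply Rplus_le_compat; auto.
Qed.

Lemma sumR_map_nonneg {A} (f : A -> R) l :
  (forall x, In x l -> 0 <= f x) -> 0 <= sumR (map f l).
Proof.
  intros H. transitivity (sumR (map (fun _ => 0) l)); [|now apply sumR_map_le].
  clear H. induction l as [|x l IH]; simpl; lra.
Qed.

Lemma sumR_map_plus {A} (f g : A -> R) l :
  sumR (map (fun x => f x + g x) l) = sumR (map f l) + sumR (map g l).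
Proof. induction l as [|x l IH]; simpl; [ring|]. rewrite IH; ring. Qed.

Lemma sumR_map_scal {A} c (f : A -> R) l :
  sumR (map (fun x => c * f x) l) = c * sumR (map f l).
Proof. induction l as [|x l IH]; simpl; [ring|]. rewrite IH; ring. Qed.

Lemma sumR_channel_lin V a b : valid_channel V ->
  sumR (map (fun p => a * fst p + b * snd p) V) = a + b.
Proof.
  intros [_ [H0 H1]]. rewrite sumR_map_plus, !sumR_map_scal, H0, H1. ring.
Qed.

Lemma sumR_channel_affine V a b c : valid_channel V ->
  sumR (map (fun p => a * fst p + b * snd p + c * sqrt (fst p * snd p)) V) = a + b + c * Zb V.
Proof.
  intros HV. rewrite sumR_map_plus, sumR_map_scal, sumR_channel_lin by exact HV. reflexivity.
Qed.

Lemma boxplus_valid V1 V2 :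
  valid_channel V1 -> valid_channel V2 -> valid_channel (boxplus V1 V2).
Proof.
  intros H1 H2. pose proof H1 as [F1 _]. pose proof H2 as [F2 _].
  rewrite Forall_forall in F1, F2. unfold boxplus. split; [|split].
  - apply Forall_forall. intros x Hx.
    apply in_flat_map in Hx as [p [Hp Hx]]. apply in_flat_map in Hx as [q [Hq Hx]].
    destruct (F1 p Hp), (F2 q Hq).
    destruct Hx as [<-|[<-|[]]]; simpl; split; nra.
  - rewrite sumR_flat_map. transitivity (/2 + /2); [|lra].
    rewrite <- (sumR_channel_lin V1 (/2) (/2) H1). f_equal.
    apply map_ext. intros p. rewrite sumR_flat_map.
    transitivity (sumR (map (fun q => (/2 * (fst p + snd p)) * fst q + 0 * snd q) V2)).
    + f_equal. apply map_ext. intros q. simpl. ring.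
    + rewrite sumR_channel_lin by exact H2. ring.
  - rewrite sumR_flat_map. transitivity (/2 + /2); [|lra].
    rewrite <- (sumR_channel_lin V1 (/2) (/2) H1). f_equal.
    apply map_ext. intros p. rewrite sumR_flat_map.
    transitivity (sumR (map (fun q => 0 * fst q + (/2 * (fst p + snd p)) * snd q) V2)).
    + f_equal. apply map_ext. intros q. simpl. ring.
    + rewrite sumR_channel_lin by exact H2. ring.
Qed.

Lemma boxminus_valid V1 V2 :
  valid_channel V1 -> valid_channel V2 -> valid_channel (boxminus V1 V2).
Proof.
  intros H1 H2. pose proof H1 as [F1 _]. pose proof H2 as [F2 _].
  rewrite Forall_forall in F1, F2. unfold boxminus. split; [|split].
  - apply Forall_forall. intros x Hx.
    apply in_flat_map in Hx as [p [Hp Hx]]. apply in_map_iff in Hx as [q [<- Hq]].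
    destruct (F1 p Hp), (F2 q Hq). simpl; split; nra.
  - rewrite sumR_flat_map. transitivity (/2 + /2); [|lra].
    rewrite <- (sumR_channel_lin V1 (/2) (/2) H1). f_equal.
    apply map_ext. intros p. rewrite map_map.
    transitivity (sumR (map (fun q => (/2 * fst p) * fst q + (/2 * snd p) * snd q) V2)).
    + f_equal. apply map_ext. intros q. simpl. ring.
    + rewrite sumR_channel_lin by exact H2. ring.
  - rewrite sumR_flat_map. transitivity (/2 + /2); [|lra].
    rewrite <- (sumR_channel_lin V1 (/2) (/2) H1). f_equal.
    apply map_ext. intros p. rewrite map_map.
    transitivity (sumR (map (fun q => (/2 * snd p) * fst q + (/2 * fst p) * snd q) V2)).
    + f_equal. apply map_ext. intros q. simpl. ring.
    + rewrite sumR_channel_lin by exact H2. ring.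
Qed.

Lemma Zb_ge0 V : 0 <= Zb V.
Proof. apply sumR_map_nonneg. intros; apply sqrt_pos. Qed.

Lemma sqrt_mul_le_mean x y : 0 <= x -> 0 <= y -> sqrt (x * y) <= /2 * x + /2 * y.
Proof.
  intros Hx Hy. rewrite sqrt_mult by assumption.
  pose proof (sqrt_sqrt x Hx). pose proof (sqrt_sqrt y Hy).
  pose proof (Rle_0_sqr (sqrt x - sqrt y)). unfold Rsqr in *. nra.
Qed.

Lemma Zb_le1 V : valid_channel V -> Zb V <= 1.
Proof.
  intros HV. pose proof HV as [F _]. rewrite Forall_forall in F.
  transitivity (sumR (map (fun p => /2 * fst p + /2 * snd p) V)).
  - apply sumR_map_le. intros p Hp. destruct (F p Hp). now apply sqrt_mul_le_mean.
  - rewrite sumR_channel_lin by exact HV. lra.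
Qed.

Lemma sqrt_half_mul a b c d : 0 <= a -> 0 <= b -> 0 <= c -> 0 <= d ->
  sqrt (/2 * (a * c) * (/2 * (b * d))) = /2 * (sqrt (a * b) * sqrt (c * d)).
Proof.
  intros. replace (/2 * (a * c) * (/2 * (b * d))) with (/2 * /2 * ((a * b) * (c * d))) by ring.
  rewrite sqrt_mult, sqrt_square, sqrt_mult; [reflexivity | repeat apply Rmult_le_pos; lra ..].
Qed.

Lemma Zb_boxplus V1 V2 : valid_channel V1 -> valid_channel V2 ->
  Zb (boxplus V1 V2) = Zb V1 * Zb V2.
Proof.
  intros [F1 _] [F2 _]. rewrite Forall_forall in F1, F2. unfold Zb at 1, boxplus.
  rewrite sumR_flat_map, Rmult_comm. unfold Zb at 2. rewrite <- sumR_map_scal.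
  apply sumR_map_ext. intros p Hp. rewrite sumR_flat_map. unfold Zb.
  rewrite Rmult_comm, <- sumR_map_scal.
  apply sumR_map_ext. intros q Hq. destruct (F1 p Hp), (F2 q Hq). simpl.
  rewrite !sqrt_half_mul by assumption. rewrite (Rmult_comm (snd p) (fst p)). field.
Qed.

(* With [al = a^2, be = b^2, ga = c^2, de = d^2], the square of the
   right-hand side minus the radicand is [ab (c-d)^2 * cd (a-b)^2 / 2]. *)
Lemma sqrt_boxminus_le al be ga de : 0 <= al -> 0 <= be -> 0 <= ga -> 0 <= de ->
  sqrt (/2 * (al * ga + be * de) * (/2 * (be * ga + al * de))) <=
  /2 * sqrt (al * be) * ga + /2 * sqrt (al * be) * de
  + (/2 * (al + be) - sqrt (al * be)) * sqrt (ga * de).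
Proof.
  intros Hal Hbe Hga Hde.
  rewrite (sqrt_mult al be), (sqrt_mult ga de) by assumption.
  pose proof (sqrt_sqrt al Hal) as Ea. pose proof (sqrt_sqrt be Hbe) as Eb.
  pose proof (sqrt_sqrt ga Hga) as Ec. pose proof (sqrt_sqrt de Hde) as Ed.
  pose proof (sqrt_pos al). pose proof (sqrt_pos be).
  pose proof (sqrt_pos ga). pose proof (sqrt_pos de).
  set (a := sqrt al) in *. set (b := sqrt be) in *.
  set (c := sqrt ga) in *. set (d := sqrt de) in *.
  rewrite <- Ea, <- Eb, <- Ec, <- Ed.
  assert (Hab : 0 <= a * b) by now apply Rmult_le_pos.
  assert (Hcd : 0 <= c * d) by now apply Rmult_le_pos.
  assert (Hcd2 : 0 <= a * b * ((c - d) * (c - d))) by (apply Rmult_le_pos; [lra | apply Rle_0_sqr]).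
  assert (Hab2 : 0 <= c * d * ((a - b) * (a - b))) by (apply Rmult_le_pos; [lra | apply Rle_0_sqr]).
  set (r := /2 * (a * b) * (c * c) + /2 * (a * b) * (d * d)
            + (/2 * (a * a + b * b) - a * b) * (c * d)).
  assert (Hr : 0 <= r).
  { replace r with (/2 * (a * b * ((c - d) * (c - d)) + c * d * ((a - b) * (a - b))
                          + 2 * (a * b) * (c * d))) by (unfold r; field).
    nra. }
  rewrite <- (sqrt_square r Hr). apply sqrt_le_1_alt.
  enough (r * r - /2 * (a * a * (c * c) + b * b * (d * d)) * (/2 * (b * b * (c * c) + a * a * (d * d)))
          = /2 * (a * b * ((c - d) * (c - d))) * (c * d * ((a - b) * (a - b)))) by nra.
  unfold r. field.
Qed.

Lemma Zb_boxminus V1 V2 : valid_channel V1 -> valid_channel V2 ->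
  Zb (boxminus V1 V2) <= Zb V1 + Zb V2 - Zb V1 * Zb V2.
Proof.
  intros H1 H2. pose proof H1 as [F1 _]. pose proof H2 as [F2 _].
  rewrite Forall_forall in F1, F2. unfold Zb at 1, boxminus. rewrite sumR_flat_map.
  transitivity (sumR (map (fun p => /2 * Zb V2 * fst p + /2 * Zb V2 * snd p
                                    + (1 - Zb V2) * sqrt (fst p * snd p)) V1)).
  2: { rewrite sumR_channel_affine by exact H1. lra. }
  apply sumR_map_le. intros p Hp. rewrite map_map.
  transitivity (sumR (map (fun q =>
      /2 * sqrt (fst p * snd p) * fst q + /2 * sqrt (fst p * snd p) * snd q
      + (/2 * (fst p + snd p) - sqrt (fst p * snd p)) * sqrt (fst q * snd q)) V2)).
  2: { rewrite sumR_channel_affine by exact H2. lra. }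
  apply sumR_map_le. intros q Hq. destruct (F1 p Hp), (F2 q Hq).
  now apply sqrt_boxminus_le.
Qed.

Lemma ln_le_compat x y : 0 < x -> x <= y -> ln x <= ln y.
Proof. intros Hx [Hxy | <-]; [left; now apply ln_increasing | right; reflexivity]. Qed.

Lemma Jc_eq V : Jc V = (ln 2 - ln (1 + Zb V)) / ln 2.
Proof.
  pose proof (Zb_ge0 V). unfold Jc, log2, Rdiv.
  rewrite ln_mult, ln_Rinv by (try apply Rinv_0_lt_compat; lra). ring.
Qed.

Lemma Jc_boxplus_boxminus V1 V2 : valid_channel V1 -> valid_channel V2 ->
  Jc (boxplus V1 V2) + Jc (boxminus V1 V2) >= Jc V1 + Jc V2.
Proof.
  intros H1 H2.
  pose proof (Zb_boxplus V1 V2 H1 H2). pose proof (Zb_boxminus V1 V2 H1 H2).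
  pose proof (Zb_le1 V1 H1). pose proof (Zb_le1 V2 H2).
  pose proof (Zb_ge0 V1). pose proof (Zb_ge0 V2). pose proof (Zb_ge0 (boxminus V1 V2)).
  rewrite !Jc_eq, H.
  set (z1 := Zb V1) in *. set (z2 := Zb V2) in *. set (zm := Zb (boxminus V1 V2)) in *.
  (* [(1 + z1 z2)(1 + z1 + z2 - z1 z2) = (1 + z1)(1 + z2) - z1 z2 (1 - z1)(1 - z2)] *)
  assert (Hz12 : 0 <= z1 * z2) by now apply Rmult_le_pos.
  assert (Hprod : (1 + z1 * z2) * (1 + zm) <= (1 + z1) * (1 + z2)).
  { assert (0 <= z1 * z2 * ((1 - z1) * (1 - z2))) by (apply Rmult_le_pos; [| apply Rmult_le_pos]; lra).
    nra. }
  assert (Hln : ln (1 + z1 * z2) + ln (1 + zm) <= ln (1 + z1) + ln (1 + z2)).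
  { rewrite <- !ln_mult by lra. apply ln_le_compat; [apply Rmult_lt_0_compat; lra | exact Hprod]. }
  assert (Hln2 : 0 < ln 2) by (rewrite <- ln_1; apply ln_increasing; lra).
  apply Rle_ge. unfold Rdiv. rewrite <- !Rmult_plus_distr_r.
  apply Rmult_le_compat_r; [left; now apply Rinv_0_lt_compat | lra].
Qed.

Lemma In_firstn {A} k (l : list A) x : In x (firstn k l) -> In x l.
Proof. intros H. rewrite <- (firstn_skipn k l). apply in_or_app; auto. Qed.

Lemma In_skipn {A} k (l : list A) x : In x (skipn k l) -> In x l.
Proof. intros H. rewrite <- (firstn_skipn k l). apply in_or_app; auto. Qed.

Lemma firstn_app_length {A} (s l : list A) : firstn (length s) (s ++ l) = s.
Proof. rewrite firstn_app, firstn_all, Nat.sub_diag. apply app_nil_r. Qed.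

Section Strings.

Variable m : nat.
Hypothesis Hm : (1 <= m)%nat.

Lemma Nwin_spec k : Nwin m k = map (fun i => Nn m (k - i)) (seq 0 m).
Proof.
  destruct m as [|m']; [lia|]. induction k as [|k IH].
  - simpl. rewrite map_const, length_seq. reflexivity.
  - change (Nwin (S m') (S k))
      with ((hd 1 (Nwin (S m') k) + last (Nwin (S m') k) 1)%nat :: removelast (Nwin (S m') k)).
    cbn [seq map]. rewrite <- seq_shift, map_map. f_equal.
    rewrite IH, seq_S, map_app. cbn [map]. now rewrite removelast_last.
Qed.

Lemma Nn_succ k : Nn m (S k) = (Nn m k + Nn m (S k - m))%nat.
Proof.
  change (Nn m (S k)) with (hd 1 (Nwin m k) + last (Nwin m k) 1)%nat.
  rewrite Nwin_spec. destruct m as [|m']; [lia|]. f_equal.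
  - cbn. now rewrite Nat.sub_0_r.
  - rewrite seq_S, map_app. cbn [map]. rewrite last_last. f_equal.
Qed.

Lemma Nn_pos n : (1 <= Nn m n)%nat.
Proof.
  induction n as [|n IH].
  - unfold Nn. simpl. destruct m; [lia | simpl; lia].
  - rewrite Nn_succ. lia.
Qed.

Lemma Nn_mono a b : (a <= b)%nat -> (Nn m a <= Nn m b)%nat.
Proof. induction 1; [lia|]. rewrite Nn_succ. lia. Qed.

Lemma Sset_succ n : Sset m (S n) =
  map (fun s => s ++ [Plus]) (firstn (Nn m (S n - m)) (Sset m n)) ++
  map (fun s => s ++ [Star]) (skipn (Nn m (S n - m)) (Sset m n)) ++
  map (fun s => s ++ [Minus]) (firstn (Nn m (S n - m)) (Sset m n)).
Proof. reflexivity. Qed.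

Lemma length_Sset n : length (Sset m n) = Nn m n.
Proof.
  induction n as [|n IH].
  - unfold Nn. simpl. destruct m; [lia | reflexivity].
  - rewrite Sset_succ, !length_app, !length_map, length_firstn, length_skipn, IH, Nn_succ.
    pose proof (Nn_mono (S n - m) n ltac:(lia)). lia.
Qed.

Lemma length_in_Sset n s : In s (Sset m n) -> length s = n.
Proof.
  revert s; induction n as [|n IH]; intros s Hs.
  - destruct Hs as [<- | []]. reflexivity.
  - rewrite Sset_succ, !in_app_iff in Hs.
    destruct Hs as [H | [H | H]]; apply in_map_iff in H as [t [<- Ht]];
      rewrite length_app, (IH t) by eauto using In_firstn, In_skipn; simpl; lia.
Qed.

Lemma map_firstn_Sset_succ n :
  map (firstn n) (Sset m (S n)) = Sset m n ++ firstn (Nn m (S n - m)) (Sset m n).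
Proof.
  assert (Htrunc : forall x L, incl L (Sset m n) -> map (fun s => firstn n (s ++ [x])) L = L).
  { intros x L HL. rewrite <- (map_id L) at 2. apply map_ext_in. intros s Hs.
    rewrite <- (length_in_Sset n s (HL s Hs)). apply firstn_app_length. }
  rewrite Sset_succ, !map_app, !map_map, !Htrunc
    by (intros s; eauto using In_firstn, In_skipn).
  now rewrite app_assoc, firstn_skipn.
Qed.

Lemma Sset_prefixes d n : (d <= n)%nat ->
  map (firstn d) (firstn (Nn m d) (Sset m n)) = Sset m d.
Proof.
  induction 1 as [|n Hdn IH].
  - rewrite firstn_all2 by (rewrite length_Sset; lia).
    rewrite <- (map_id (Sset m d)) at 2. apply map_ext_in. intros s Hs.
    rewrite <- (length_in_Sset d s Hs) at 1. apply firstn_all.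
  - rewrite <- IH.
    replace (map (firstn d) (firstn (Nn m d) (Sset m (S n))))
      with (map (firstn d) (map (firstn n) (firstn (Nn m d) (Sset m (S n))))).
    + rewrite <- firstn_map, map_firstn_Sset_succ, firstn_app, length_Sset.
      pose proof (Nn_mono d n Hdn).
      replace (Nn m d - Nn m n)%nat with 0%nat by lia. now rewrite app_nil_r.
    + rewrite map_map. apply map_ext. intros s. rewrite firstn_firstn. f_equal. lia.
Qed.

End Strings.

Lemma Wfuel_succ m W f t : t <> [] -> Wfuel m W (S f) t =
  match last t Star with
  | Plus => boxplus (Wfuel m W f (firstn (length t - m) t)) (Wfuel m W f (removelast t))
  | Minus => boxminus (Wfuel m W f (firstn (length t - m) t)) (Wfuel m W f (removelast t))
  | Star => Wfuel m W f (removelast t)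
  end.
Proof. destruct t; [congruence | reflexivity]. Qed.

Lemma Wfuel_valid m W f t : valid_channel W -> valid_channel (Wfuel m W f t).
Proof.
  intros HW. revert t; induction f as [|f IH]; intros t; [exact HW|].
  destruct t as [|x t]; [exact HW|]. rewrite Wfuel_succ by discriminate.
  destruct (last _ _); auto using boxplus_valid, boxminus_valid.
Qed.

Lemma Wt_valid m W t : valid_channel W -> valid_channel (Wt m W t).
Proof. apply Wfuel_valid. Qed.

Lemma length_removelast {A} (t : list A) : t <> [] -> length (removelast t) = (length t - 1)%nat.
Proof.
  intros H. destruct (exists_last H) as [l [a ->]].
  rewrite removelast_last, length_app. simpl. lia.
Qed.

(* Since [m >= 1] both recursive calls are on strictly shorter strings. *)
Lemma Wfuel_enough_fuel m W f1 f2 t : (1 <= m)%nat ->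
  (length t <= f1)%nat -> (length t <= f2)%nat -> Wfuel m W f1 t = Wfuel m W f2 t.
Proof.
  intros Hm. revert f2 t; induction f1 as [|f1 IH]; intros f2 t H1 H2.
  - destruct t; [destruct f2; reflexivity | simpl in H1; lia].
  - destruct t as [|x t0] eqn:Et; [destruct f2; reflexivity|].
    destruct f2 as [|f2]; [simpl in H2; lia|].
    rewrite <- Et in *. assert (Hne : t <> []) by (subst; discriminate).
    rewrite !Wfuel_succ by exact Hne.
    pose proof (length_removelast t Hne).
    assert (length (firstn (length t - m) t) <= length t - 1)%nat
      by (rewrite length_firstn; lia).
    rewrite (IH f2 (removelast t)), (IH f2 (firstn (length t - m) t)) by lia.
    reflexivity.
Qed.

Lemma Wt_snoc m W p x : (1 <= m)%nat -> Wt m W (p ++ [x]) =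
  match x with
  | Plus => boxplus (Wt m W (firstn (S (length p) - m) p)) (Wt m W p)
  | Minus => boxminus (Wt m W (firstn (S (length p) - m) p)) (Wt m W p)
  | Star => Wt m W p
  end.
Proof.
  intros Hm. unfold Wt at 1.
  assert (L : length (p ++ [x]) = S (length p)) by (rewrite length_app; simpl; lia).
  rewrite L, Wfuel_succ by (destruct p; discriminate).
  rewrite L, last_last, removelast_last, firstn_app.
  replace (S (length p) - m - length p)%nat with 0%nat by lia.
  rewrite app_nil_r.
  assert (Hfuel : Wfuel m W (length p) (firstn (S (length p) - m) p)
                  = Wt m W (firstn (S (length p) - m) p)).
  { unfold Wt. apply Wfuel_enough_fuel; trivial; rewrite length_firstn; lia. }
  destruct x; rewrite ?Hfuel; reflexivity.
Qed.

Definition sumJ m W n := sumR (map (fun s => Jc (Wt m W s)) (Sset m n)).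

Lemma sumJ_succ m W n : (1 <= m)%nat -> valid_channel W ->
  sumJ m W n + sumJ m W (S n - m) <= sumJ m W (S n).
Proof.
  intros Hm HW. unfold sumJ.
  set (g := fun s => Jc (Wt m W s)). set (d := (S n - m)%nat).
  set (Q := firstn (Nn m d) (Sset m n)).
  assert (Hsplit : sumR (map g (Sset m n)) = sumR (map g Q) + sumR (map g (skipn (Nn m d) (Sset m n))))
    by (rewrite <- sumR_app, <- map_app; unfold Q; now rewrite firstn_skipn).
  assert (Hprefix : sumR (map g (Sset m d)) = sumR (map (fun s => g (firstn d s)) Q))
    by (unfold Q; rewrite <- (Sset_prefixes m Hm d n) by lia; now rewrite map_map).
  assert (Hpm : sumR (map (fun s => g (firstn d s)) Q) + sumR (map g Q) <=
                sumR (map (fun s => g (s ++ [Plus])) Q) + sumR (map (fun s => g (s ++ [Minus])) Q)).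
  { rewrite <- !sumR_map_plus. apply sumR_map_le. intros s Hs.
    assert (Hlen : length s = n) by (apply (length_in_Sset m Hm); eauto using In_firstn).
    unfold g. rewrite !Wt_snoc, Hlen by exact Hm.
    apply Rge_le, Jc_boxplus_boxminus; now apply Wt_valid. }
  assert (Hstar : forall L, sumR (map (fun s => g (s ++ [Star])) L) = sumR (map g L))
    by (intros L; apply sumR_map_ext; intros s _; unfold g; now rewrite Wt_snoc).
  fold g. rewrite Sset_succ, !map_app, !sumR_app, !map_map. fold d Q.
  rewrite Hsplit, Hprefix, Hstar. lra.
Qed.

Lemma Rmin_le_mediant x y a b : 0 < a -> 0 < b -> Rmin (x / a) (y / b) <= (x + y) / (a + b).
Proof.
  intros Ha Hb. set (mu := Rmin (x / a) (y / b)).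
  assert (Hx : mu * a <= x).
  { apply (Rmult_le_reg_r (/ a)); [now apply Rinv_0_lt_compat|].
    replace (mu * a * / a) with mu by (field; lra). apply Rmin_l. }
  assert (Hy : mu * b <= y).
  { apply (Rmult_le_reg_r (/ b)); [now apply Rinv_0_lt_compat|].
    replace (mu * b * / b) with mu by (field; lra). apply Rmin_r. }
  apply (Rmult_le_reg_r (a + b)); [lra|].
  replace ((x + y) / (a + b) * (a + b)) with (x + y) by (field; lra). lra.
Qed.

Lemma EJ_of_nat m W z : (1 <= m)%nat ->
  EJ m W z = sumJ m W (Z.to_nat z) / INR (Nn m (Z.to_nat z)).
Proof.
  intros Hm. unfold EJ. destruct (z <=? 0)%Z eqn:Hz.
  - apply Z.leb_le in Hz. replace (Z.to_nat z) with 0%nat by lia.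
    unfold sumJ, Nn. destruct m; [lia|]. simpl. unfold Wt. simpl. field.
  - unfold Rdiv. apply Rmult_comm.
Qed.

Lemma EJ_succ m W z : (1 <= m)%nat -> valid_channel W -> (1 <= z)%Z ->
  Rmin (EJ m W (z - 1)) (EJ m W (z - Z.of_nat m)) <= EJ m W z.
Proof.
  intros Hm HW Hz. rewrite !EJ_of_nat by exact Hm.
  set (n := Z.to_nat (z - 1)).
  replace (Z.to_nat z) with (S n) by lia.
  replace (Z.to_nat (z - Z.of_nat m)) with (S n - m)%nat by lia.
  assert (Hpos : forall j, 0 < INR (Nn m j))
    by (intros j; apply lt_0_INR; pose proof (Nn_pos m Hm j); lia).
  rewrite (Nn_succ m Hm), plus_INR.
  eapply Rle_trans; [apply Rmin_le_mediant; apply Hpos|].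
  apply Rmult_le_compat_r.
  - left. apply Rinv_0_lt_compat. pose proof (Hpos n). pose proof (Hpos (S n - m)%nat). lra.
  - now apply sumJ_succ.
Qed.

Lemma lower_bound_propagates (f : Z -> R) (m : nat) (c : R) (a : Z) :
  (1 <= m)%nat -> (0 <= a)%Z ->
  (forall z : Z, (1 <= z)%Z -> Rmin (f (z - 1)%Z) (f (z - Z.of_nat m)%Z) <= f z) ->
  (forall z : Z, (a - Z.of_nat m < z <= a)%Z -> c <= f z) ->
  forall z : Z, (a - Z.of_nat m < z)%Z -> c <= f z.
Proof.
  intros Hm Ha Hrec Hwin.
  assert (Hind : forall (j : nat) (z : Z), (a - Z.of_nat m < z <= a + Z.of_nat j)%Z -> c <= f z).
  { induction j as [|j IH]; intros z Hz; [apply Hwin; lia|].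
    destruct (Z.le_gt_cases z (a + Z.of_nat j)) as [Hle | Hgt]; [apply IH; lia|].
    eapply Rle_trans; [|apply Hrec; lia].
    apply Rmin_glb; apply IH; lia. }
  intros z Hz. apply (Hind (Z.to_nat (z - a))). lia.
Qed.

Lemma fold_right_Rmin_le {A} x (g : A -> R) l i : In i l -> fold_right Rmin x (map g l) <= g i.
Proof.
  induction l as [|j l IH]; simpl; intros H; [destruct H|].
  destruct H as [<- | H]; [apply Rmin_l | eapply Rle_trans; [apply Rmin_r | auto]].
Qed.

Lemma fold_right_Rmin_ge {A} c x (g : A -> R) l :
  c <= x -> (forall i, In i l -> c <= g i) -> c <= fold_right Rmin x (map g l).
Proof. induction l as [|j l IH]; simpl; intros Hx H; auto. apply Rmin_glb; auto. Qed.

Theorem lemma2 (m : nat) (W : channel) :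
  (1 <= m)%nat -> valid_channel W ->
  forall k : nat, (1 <= k)%nat -> EJhat m W k >= EJhat m W (k - 1).
Proof.
  intros Hm HW k Hk.
  set (a := (Z.of_nat (k - 1) * Z.of_nat m)%Z).
  assert (Ha : (a + Z.of_nat m = Z.of_nat k * Z.of_nat m)%Z) by (unfold a; nia).
  assert (Hwindow : forall z : Z, (a - Z.of_nat m < z <= a)%Z -> EJhat m W (k - 1) <= EJ m W z).
  { intros z Hz. unfold EJhat.
    replace z with (a - Z.of_nat (Z.to_nat (a - z)))%Z by lia.
    apply (fold_right_Rmin_le _ (fun i => EJ m W (a - Z.of_nat i)%Z)).
    apply in_seq. lia. }
  assert (Hbound := lower_bound_propagates (EJ m W) m _ a Hm ltac:(lia)
                      (fun z => EJ_succ m W z Hm HW) Hwindow).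
  apply Rle_ge. unfold EJhat at 1. apply fold_right_Rmin_ge.
  - apply Hbound. lia.
  - intros i Hi. apply in_seq in Hi. apply Hbound. lia.
Qed.
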